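(* The functions $\epsilon_n/w$ satisfy the same differential equation as the orthogonal polynomials, namely \[ W(x)\frac{\mathrm{d}}{\mathrm{d}x}\frac{\epsilon_n(x)}{w(x)} = (\Omega_n(x) - V(x))\frac{\epsilon_n(x)}{w(x)} - a_n \Theta_n(x)\frac{\epsilon_{n-1}(x)}{w(x)}. \]
   Context: Let $w$ be a weight on an interval $I$ whose logarithmic derivative is rational, $\frac{\mathrm{d}}{\mathrm{d}x}\ln w(x) = \frac{2V}{W}$ with $V,W$ polynomials. Let $\{p_n\}$ be the orthonormal polynomials for $w$ on $I$, $p_n(x)=\gamma_n x^n+\gamma_{n,1}x^{n-1}+\dots$, with three term recurrence $a_{n+1}p_{n+1} = (x-b_n)p_n - a_n p_{n-1}$. Let $f(x)=\int_I \frac{w(s)}{x-s}ds$ be the Stieltjes function, which satisfies $W f' = 2Vf + U$ for a polynomial $U$, and define the associated functions $\epsilon_n(x)=\int_I \frac{p_n(s)}{x-s}w(s)\,ds$ and associated polynomials $\phi_{n-1}(x)=\int_I\frac{p_n(s)-p_n(x)}{s-x}w(s)\,ds$, so that $fp_n=\phi_{n-1}+\epsilon_n$. Define the polynomials $\Theta_n = W( \epsilon_n p_n' - p_n\epsilon_n') + 2V \epsilon_np_n$ and $\Omega_n = a_nW( \epsilon_{n-1} p_n' - p_{n-1}\epsilon_n') + a_nV(\epsilon_{n-1}p_n + \epsilon_np_{n-1})$. It is known (Theorem 2.1) that the polynomials satisfy $W(x)p_n'(x) = (\Omega_n(x) - V(x))p_n(x) - a_n \Theta_n(x)p_{n-1}(x)$.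 *)

From HB Require Import structures.
From mathcomp Require Import all_boot all_order all_algebra.
From mathcomp Require Import all_classical all_reals all_analysis.
From mathcomp Require Import complex.
Import Order.TTheory GRing.Theory Num.Theory.
Import numFieldNormedType.Exports.

Set Implicit Arguments.
Unset Strict Implicit.
Unset Printing Implicit Defensive.

Local Open Scope ring_scope.
Local Open Scope complex_scope.

Definition cpoly (R : rcfType) (q : {poly R}) (z : R[i]) : R[i] :=
  (map_poly (fun r : R => r%:C) q).[z].

Definition cderive (R : rcfType) (f : R[i] -> R[i]) (z : R[i]) : R[i] :=
  @derive1 R[i] R[i]^o f z.

Definition cderivable (R : rcfType) (f : R[i] -> R[i]) (z : R[i]) : Prop :=
  @derivable R[i] R[i]^o R[i]^o f z 1.

Definition cRint (R : realType) (D : set R) (f : R -> R[i]) : R[i] :=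
  Complex (Rintegral (@lebesgue_measure R) D (fun s => complex.Re (f s)))
          (Rintegral (@lebesgue_measure R) D (fun s => complex.Im (f s))).

Definition eps (R : realType) (I : interval R) (w : R -> R)
  (p : nat -> {poly R}) (n : nat) (z : R[i]) : R[i] :=
  cRint [set` I] (fun s => ((p n).[s] * w s)%:C / (z - s%:C)).

Definition Theta (R : realType) (I : interval R) (w : R -> R)
  (p : nat -> {poly R}) (V W : {poly R}) (n : nat) (z : R[i]) : R[i] :=
  cpoly W z * (eps I w p n z * cpoly (p n)^`() z
               - cpoly (p n) z * cderive (eps I w p n) z)
  + 2 * cpoly V z * eps I w p n z * cpoly (p n) z.

Definition Omega (R : realType) (I : interval R) (w : R -> R)
  (p : nat -> {poly R}) (a : nat -> R) (V W : {poly R}) (n : nat)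
  (z : R[i]) : R[i] :=
  (a n)%:C * cpoly W z * (eps I w p n.-1 z * cpoly (p n)^`() z
                          - cpoly (p n.-1) z * cderive (eps I w p n) z)
  + (a n)%:C * cpoly V z * (eps I w p n.-1 z * cpoly (p n) z
                            + eps I w p n z * cpoly (p n.-1) z).

From HB Require Import structures.
From mathcomp Require Import all_boot all_order all_algebra.
From mathcomp Require Import all_classical all_reals all_analysis.
From mathcomp Require Import complex.
From mathcomp Require Import measurable_realfun.
From mathcomp Require Import ring lra.
Import Order.TTheory GRing.Theory Num.Theory.
Import numFieldNormedType.Exports.
Import ComplexField.Normc.
Local Open Scope ring_scope.
Local Open Scope complex_scope.

(* The Stieltjes functions eps_m satisfy the same three-term recurrence as the
   p_m, up to the term \int p_m w, which vanishes for m >= 1 by orthogonality and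
   accounts for the normalisation at m = 0. Hence the Casoratian
   a_n (eps_{n-1} p_n - p_{n-1} eps_n) equals 1 at every z off I. Substituting it
   into the definitions of Omega_n and Theta_n, the right-hand side collapses to
   (W eps_n' - 2 V eps_n) / w, which is W (eps_n / w)' by the quotient rule and
   W w' = 2 V w. Differentiability of eps_n at z is differentiation under the
   integral sign: the difference quotient of 1 / (z - s) is controlled uniformly
   in s because z stays at positive distance from I.
   Of the hypotheses on w only its moments enter. *)

Section Normc.
Context {R : rcfType}.
Implicit Types (x h : R[i]) (r : R).

Lemma normc_ge0 x : 0 <= normc x.
Proof. by case: x => u v; rewrite /normc sqrtr_ge0. Qed.

Lemma normc_real r : normc r%:C = `|r|.
Proof. by rewrite /normc /= expr0n /= addr0 sqrtr_sqr. Qed.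

Lemma normc_ge_absRe x : `|complex.Re x| <= normc x.
Proof.
case: x => u v; rewrite /= -sqrtr_sqr ler_sqrt ?lerDl ?sqr_ge0 //.
by rewrite addr_ge0 ?sqr_ge0.
Qed.

Lemma normc_ge_absIm x : `|complex.Im x| <= normc x.
Proof.
case: x => u v; rewrite /= -sqrtr_sqr ler_sqrt ?lerDr ?sqr_ge0 //.
by rewrite addr_ge0 ?sqr_ge0.
Qed.

Lemma normc_le_ReIm x : normc x <= `|complex.Re x| + `|complex.Im x|.
Proof.
rewrite {1}[x]complexE (le_trans (le_normcD _ _)) // normcM !normc_real.
by rewrite [normc _](_ : _ = 1) ?mul1r // /normc /= expr0n expr1n add0r sqrtr1.
Qed.

Lemma normc_dquot_inv_le x h (d : R) : 0 < d -> d <= normc x ->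
  normc h <= d / 2 -> h != 0 ->
  normc (h^-1 * ((x + h)^-1 - x^-1) + x^-2) <= normc h * (2 / d ^+ 3).
Proof.
move=> d_gt0 dx hd h0.
have xh_ge : d / 2 <= normc (x + h).
  by have := le_normcD (x + h) (- h); rewrite addrK normcN; lra.
have x0 : x != 0 by apply: contraTneq dx => ->; rewrite normc0 -ltNge.
have xh0 : x + h != 0.
  by apply: contraTneq xh_ge => ->; rewrite normc0 -ltNge; lra.
have -> : h^-1 * ((x + h)^-1 - x^-1) + x^-2 = h / (x ^+ 2 * (x + h)).
  by field; rewrite x0 xh0 h0.
set N := normc x ^+ 2 * normc (x + h).
have dN : d ^+ 3 <= 2 * N.
  have -> : d ^+ 3 = 2 * (d * d * (d / 2)) by field.
  rewrite ler_pM2l // ler_pM //; first by rewrite mulr_ge0 // ltW.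
  - by rewrite divr_ge0 // ltW.
  - by rewrite expr2; apply: ler_pM => //; apply: ltW.
have N_gt0 : 0 < N by have := exprn_gt0 3 d_gt0; lra.
have nx2 : normc (x ^+ 2) = normc x ^+ 2 by rewrite !expr2 normcM.
rewrite normcM normcV normcM nx2 -/N ler_pdivrMr //.
rewrite -mulrA ler_peMr ?normc_ge0 //.
by rewrite mulrAC ler_pdivlMr ?exprn_gt0 // mul1r.
Qed.
End Normc.

(* Sets are taken in measurableTypeR R, the carrier of Lebesgue measure, so that
   [measurable D] is the hypothesis expected by the integration lemmas. *)
Section ComplexIntegral.
Context {R : realType} {D : set (measurableTypeR R)}.
Hypothesis mD : measurable D.
Local Notation mu := (@lebesgue_measure R).

Lemma integrableZl_real (k : R) {f : R -> R} :
  mu.-integrable D (EFin \o f) -> mu.-integrable D (EFin \o (fun s => k * f s)).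
Proof.
move=> i; move: (integrableZl mD k i).
by apply: (eq_integrable mD) => s _ /=; rewrite EFinM.
Qed.

Lemma integrableD_real {f1 f2 : R -> R} :
  mu.-integrable D (EFin \o f1) -> mu.-integrable D (EFin \o f2) ->
  mu.-integrable D (EFin \o (fun s => f1 s + f2 s)).
Proof.
move=> i1 i2; move: (integrableD mD i1 i2).
by apply: (eq_integrable mD) => s _ /=; rewrite EFinD.
Qed.

Definition cintegrable (f : R -> R[i]) :=
  mu.-integrable D (EFin \o (fun s => complex.Re (f s))) /\
  mu.-integrable D (EFin \o (fun s => complex.Im (f s))).

Lemma cintegrableD {f g} : cintegrable f -> cintegrable g ->
  cintegrable (fun s => f s + g s).
Proof.
move=> [f1 f2] [g1 g2]; split.
- move: (integrableD_real f1 g1); apply: (eq_integrable mD) => s _ /=.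
  by case: (f s); case: (g s).
- move: (integrableD_real f2 g2); apply: (eq_integrable mD) => s _ /=.
  by case: (f s); case: (g s).
Qed.

Lemma cintegrableZ c {f} : cintegrable f -> cintegrable (fun s => c * f s).
Proof.
move=> [f1 f2]; case: c => u v; split.
- move: (integrableD_real (integrableZl_real u f1) (integrableZl_real (- v) f2)).
  by apply: (eq_integrable mD) => s _ /=; case: (f s) => * /=; rewrite mulNr.
- move: (integrableD_real (integrableZl_real u f2) (integrableZl_real v f1)).
  by apply: (eq_integrable mD) => s _ /=; case: (f s).
Qed.

Lemma eq_cRint f g : {in D, f =1 g} -> cRint D f = cRint D g.
Proof. by move=> fg; congr Complex; apply: eq_Rintegral => s Ds; rewrite fg. Qed.

Lemma cRintD {f g} : cintegrable f -> cintegrable g ->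
  cRint D (fun s => f s + g s) = cRint D f + cRint D g.
Proof.
move=> [f1 f2] [g1 g2].
transitivity (Complex
  (Rintegral mu D (fun s => complex.Re (f s) + complex.Re (g s)))
  (Rintegral mu D (fun s => complex.Im (f s) + complex.Im (g s)))).
  by congr Complex; apply: eq_Rintegral => s _; case: (f s); case: (g s).
by rewrite !RintegralD.
Qed.

Lemma cRintZ c {f} : cintegrable f -> cRint D (fun s => c * f s) = c * cRint D f.
Proof.
move=> [f1 f2]; case: c => u v.
transitivity (Complex
  (Rintegral mu D (fun s => u * complex.Re (f s) + - v * complex.Im (f s)))
  (Rintegral mu D (fun s => u * complex.Im (f s) + v * complex.Re (f s)))).
  by congr Complex; apply: eq_Rintegral => s _; case: (f s) => * /=; ring.
by rewrite !RintegralD ?integrableZl_real // !RintegralZl // mulNr.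
Qed.

Lemma cRint_real (r : R -> R) : cRint D (fun s => (r s)%:C) = (Rintegral mu D r)%:C.
Proof. by congr Complex; rewrite Rintegral_cst // mul0r. Qed.

Lemma normc_cRint_le {f} {k : R -> R} : cintegrable f ->
  mu.-integrable D (EFin \o k) -> (forall s, D s -> normc (f s) <= k s) ->
  normc (cRint D f) <= 2 * Rintegral mu D k.
Proof.
move=> [f1 f2] ik fk; apply: (le_trans (normc_le_ReIm _)).
rewrite mulr_natl mulr2n; apply: lerD; apply: (le_trans (le_normr_Rintegral mD _)) => //.
- apply: le_Rintegral (integrable_norm f1) ik _ => // s Ds /=.
  exact: le_trans (normc_ge_absRe _) (fk s Ds).
- apply: le_Rintegral (integrable_norm f2) ik _ => // s Ds /=.
  exact: le_trans (normc_ge_absIm _) (fk s Ds).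
Qed.

Lemma measurable_fun_inv_ge (f : R -> R) (m : R) : 0 < m -> continuous f ->
  (forall s, D s -> m <= f s) -> measurable_fun D (fun s => (f s)^-1).
Proof.
move=> m_gt0 cf fm.
have cfm : continuous (fun s => (Num.max (f s) m)^-1).
  move=> s; apply: (@continuousV R R (fun s => Num.max (f s) m)).
    by rewrite gt_eqF // lt_max m_gt0 orbT.
  by apply: (@continuous_max R R f (cst m)); [exact: cf | exact: cst_continuous].
apply: eq_measurable_fun (measurable_funTS (continuous_measurable_fun cfm)).
by move=> s; rewrite inE => Ds /=; rewrite max_l // fm.
Qed.

Definition cbounded_measurable (K : R -> R[i]) :=
  [/\ measurable_fun D (fun s => complex.Re (K s)),
      measurable_fun D (fun s => complex.Im (K s)) &
      exists M : R, forall s, D s -> normc (K s) <= M].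

Lemma cbounded_measurableM K1 K2 : cbounded_measurable K1 ->
  cbounded_measurable K2 -> cbounded_measurable (fun s => K1 s * K2 s).
Proof.
move=> [r1 i1 [M1 K1M]] [r2 i2 [M2 K2M]]; split.
- apply: eq_measurable_fun (measurable_funB (measurable_funM r1 r2) (measurable_funM i1 i2)).
  by move=> s _ /=; case: (K1 s); case: (K2 s).
- apply: eq_measurable_fun (measurable_funD (measurable_funM r1 i2) (measurable_funM i1 r2)).
  by move=> s _ /=; case: (K1 s); case: (K2 s).
- exists (M1 * M2) => s Ds; rewrite normcM.
  by apply: ler_pM; rewrite ?normc_ge0 ?K1M ?K2M.
Qed.

Lemma cbounded_measurable_inv_sub {u : R[i]} {d : R} : 0 < d ->
  (forall s, D s -> d <= normc (u - s%:C)) ->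
  cbounded_measurable (fun s => (u - s%:C)^-1).
Proof.
case: u => x y d_gt0 ud.
pose P : {poly R} := ('X - x%:P) ^+ 2 + (y ^+ 2)%:P.
have PE s : P.[s] = (x - s) ^+ 2 + y ^+ 2 by rewrite !hornerE; ring.
have mPV : measurable_fun D (fun s => P.[s]^-1).
  apply: (@measurable_fun_inv_ge _ (d ^+ 2)); first exact: exprn_gt0.
    exact: continuous_horner.
  move=> s Ds; rewrite PE -ler_sqrt ?addr_ge0 ?sqr_ge0 // sqrtr_sqr.
  rewrite ger0_norm; last exact: ltW.
  by have := ud s Ds; rewrite /normc /= subr0.
split.
- have m : measurable_fun D (fun s => (x - s) * P.[s]^-1).
    by apply: measurable_funM => //;
      apply: measurable_funB.
  apply: eq_measurable_fun m.
  by move=> s _; rewrite /= PE subr0.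
- have m : measurable_fun D (fun s => - y * P.[s]^-1).
    exact: measurable_funM.
  apply: eq_measurable_fun m.
  by move=> s _; rewrite /= PE subr0 mulNr.
- exists d^-1 => s Ds; rewrite normcV lef_pV2 ?ud //.
  by rewrite posrE (lt_le_trans d_gt0) ?ud.
Qed.

Lemma cintegrable_mul_bounded {g : R -> R} {K} : mu.-integrable D (EFin \o g) ->
  cbounded_measurable K -> cintegrable (fun s => (g s)%:C * K s).
Proof.
move=> ig [mRe mIm [M KM]].
have bounded_part (h : R -> R) : (forall s, D s -> `|h s| <= normc (K s)) ->
    [bounded h s | s in D].
  move=> hK; apply: filterS (nbhs_pinfty_ge (num_real M)) => N MN s Ds.
  exact: le_trans (hK s Ds) (le_trans (KM s Ds) MN).
split.
- move: (integrableMl mD ig mRe (bounded_part _ (fun s _ => normc_ge_absRe _))).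
  by apply: (eq_integrable mD) => s _ /=; case: (K s) => * /=; rewrite mul0r subr0.
- move: (integrableMl mD ig mIm (bounded_part _ (fun s _ => normc_ge_absIm _))).
  by apply: (eq_integrable mD) => s _ /=; case: (K s) => * /=; rewrite mul0r addr0.
Qed.

Definition cauchy_transform (g : R -> R) (u : R[i]) : R[i] :=
  cRint D (fun s => (g s)%:C / (u - s%:C)).

Section Derivative.
Context {g : R -> R} {z : R[i]} {d : R}.
Hypotheses (ig : mu.-integrable D (EFin \o g)) (d_gt0 : 0 < d).
Hypothesis z_far : forall s, D s -> d <= normc (z - s%:C).

Let K := fun s => (z - s%:C)^-1.

Lemma cauchy_transform_dquot_le h : normc h <= d / 2 -> h != 0 ->
  normc (h^-1 * (cauchy_transform g (z + h) - cauchy_transform g z)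
         + cRint D (fun s => (g s)%:C * (K s * K s)))
  <= normc h * (4 / d ^+ 3 * Rintegral mu D (fun s => `|g s|)).
Proof.
move=> hd h0.
have zh_far s : D s -> d / 2 <= normc (z + h - s%:C).
  move=> Ds; have := le_normcD (z + h - s%:C) (- h); rewrite normcN.
  by rewrite (_ : _ + - h = z - s%:C); [have := z_far _ Ds; lra | ring].
have iK : cintegrable (fun s => (g s)%:C * K s).
  exact: cintegrable_mul_bounded ig (cbounded_measurable_inv_sub d_gt0 z_far).
have iKh : cintegrable (fun s => (g s)%:C * (z + h - s%:C)^-1).
  apply: cintegrable_mul_bounded => //.
  by apply: (@cbounded_measurable_inv_sub _ (d / 2)); rewrite ?divr_gt0.
have iK2 : cintegrable (fun s => (g s)%:C * (K s * K s)).
  apply: cintegrable_mul_bounded => //.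
  by apply: cbounded_measurableM; exact: cbounded_measurable_inv_sub d_gt0 z_far.
have iK' := cintegrableZ (-1) iK.
have iKhK := cintegrableD iKh iK'.
have iF := cintegrableZ h^-1 iKhK.
rewrite [X in normc X](_ : _ = cRint D (fun s =>
    h^-1 * ((g s)%:C * (z + h - s%:C)^-1 + -1 * ((g s)%:C * K s))
    + (g s)%:C * (K s * K s))); last first.
  by rewrite (cRintD iF iK2) (cRintZ _ iKhK) (cRintD iKh iK') (cRintZ _ iK) mulN1r.
set c := normc h * (2 / d ^+ 3).
have -> : normc h * (4 / d ^+ 3 * Rintegral mu D (fun s => `|g s|))
        = 2 * Rintegral mu D (fun s => c * `|g s|).
  by rewrite RintegralZl //; [rewrite /c; ring | exact: integrable_norm].
apply: (normc_cRint_le (cintegrableD iF iK2)).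
  exact (integrableZl_real c (integrable_norm ig)).
move=> s Ds.
rewrite (_ : _ + _ = (g s)%:C * (h^-1 * ((z - s%:C + h)^-1 - (z - s%:C)^-1) + (z - s%:C)^-2)).
  rewrite normcM normc_real mulrC ler_wpM2r ?normr_ge0 //.
  exact: normc_dquot_inv_le (z_far _ Ds) hd h0.
by rewrite /K -exprVn expr2 [z - s%:C + h]addrAC; ring.
Qed.

Lemma cauchy_transform_derivable : cderivable (cauchy_transform g) z.
Proof.
set L := cRint D (fun s => (g s)%:C * (K s * K s)).
set C := 4 / d ^+ 3 * Rintegral mu D (fun s => `|g s|).
have C_ge0 : 0 <= C.
  apply: mulr_ge0; last by apply: Rintegral_ge0 => s _.
  by rewrite divr_ge0 // exprn_ge0 // ltW.
rewrite /cderivable; apply/cvg_ex; exists (- L); apply/cvgrPdist_le => /= e e_gt0.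
have eE : e = (complex.Re e)%:C by rewrite RRe_real // gtr0_real.
set eR := complex.Re e in eE.
have eR_gt0 : 0 < eR by rewrite -ltcR -eE.
set del := Num.min (d / 2) (eR / (C + 1)).
have del_gt0 : 0 < del by rewrite lt_min !divr_gt0 //; lra.
exists del%:C => /=; first by rewrite ltcR.
move=> h; rewrite /ball_ /= sub0r normrN ltcR => hdel h0.
have hd : normc h <= d / 2 by apply/ltW/(lt_le_trans hdel); rewrite ge_min lexx.
have he : normc h <= eR / (C + 1).
  by apply/ltW/(lt_le_trans hdel); rewrite ge_min lexx orbT.
have := cauchy_transform_dquot_le h hd h0; rewrite -/L -/C => hL.
rewrite eE -normrN opprB opprK -[h%:A]/(h * 1) mulr1 [h + z]addrC.
rewrite -[`|_|]/((normc _)%:C) lecR; apply: le_trans hL _.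
move: he; rewrite ler_pdivlMr; last by lra.
by have := normc_ge0 h; nra.
Qed.
End Derivative.
End ComplexIntegral.

Arguments cintegrable {R} D f.
Arguments cbounded_measurable {R} D K.
Arguments cauchy_transform {R} D g u.

Lemma cpoly_recurrence {R : rcfType} {P0 P1 P2 : {poly R}} {a2 b1 a1 : R} z :
  a2 *: P2 = ('X - b1%:P) * P1 - a1 *: P0 ->
  a2%:C * cpoly P2 z = (z - b1%:C) * cpoly P1 z - a1%:C * cpoly P0 z.
Proof.
move/(congr1 (fun q => cpoly q z)); rewrite /cpoly rmorphB rmorphM /= !map_polyZ.
by rewrite map_polyXsubC !hornerE.
Qed.

Section StieltjesFunctions.
Context {R : realType} {I : interval R} {w : R -> R}.
Local Notation D := ([set` I]%classic : set (measurableTypeR R)).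
Local Notation mu := (@lebesgue_measure R).
Let mD : measurable D := measurable_itv I.
Hypothesis moments : forall k : nat, mu.-integrable D (fun s => (s ^+ k * w s)%:E).

Lemma integrable_horner_weight (q : {poly R}) :
  mu.-integrable D (EFin \o (fun s => q.[s] * w s)).
Proof.
suff H k : mu.-integrable D (EFin \o (fun s => q.[s] * (s ^+ k * w s))).
  by move: (H 0%N); apply: (eq_integrable mD) => s _ /=; rewrite mul1r.
elim/poly_ind: q k => [|q c IH] k.
  by move: (integrable0 mu D); apply: (eq_integrable mD) => s _ /=; rewrite horner0 mul0r.
move: (integrableD_real mD (IH k.+1) (integrableZl_real mD c (moments k))).
apply: (eq_integrable mD) => s _ /=.
by rewrite hornerMXaddC exprS; congr (_%:E); ring.
Qed.

Context {z : R[i]} {d : R}.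
Hypotheses (d_gt0 : 0 < d) (z_far : forall s, D s -> d <= normc (z - s%:C)).

Local Notation stieltjes q := (cauchy_transform D (fun s => q.[s] * w s) z).

Lemma cauchy_transform_recurrence {P0 P1 P2 : {poly R}} {a2 b1 a1 : R} :
  a2 *: P2 = ('X - b1%:P) * P1 - a1 *: P0 ->
  a2%:C * stieltjes P2 = (z - b1%:C) * stieltjes P1
                  - (Rintegral mu D (fun s => P1.[s] * w s))%:C - a1%:C * stieltjes P0.
Proof.
move=> rec.
have ist q : cintegrable D (fun s => (q.[s] * w s)%:C / (z - s%:C)).
  exact (cintegrable_mul_bounded mD (integrable_horner_weight q)
           (cbounded_measurable_inv_sub d_gt0 z_far)).
have iP1 : cintegrable D (fun s => (P1.[s] * w s)%:C).
  split; first exact: integrable_horner_weight.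
  by move: (integrable0 mu D); apply: (eq_integrable mD).
rewrite -(cRintZ mD _ (ist P2)).
transitivity (cRint D (fun s => (z - b1%:C) * ((P1.[s] * w s)%:C / (z - s%:C))
    + (-1 * (P1.[s] * w s)%:C + - a1%:C * ((P0.[s] * w s)%:C / (z - s%:C))))).
  apply: eq_cRint => s; rewrite inE => Ds.
  have zs : z - s%:C != 0.
    by apply: contraTneq (z_far _ Ds) => ->; rewrite normc0 -ltNge.
  have Hs : a2 * P2.[s] = (s - b1) * P1.[s] - a1 * P0.[s].
    by move/(congr1 (horner^~ s)): rec; rewrite !hornerE.
  rewrite mulrA -rmorphM [a2 * _]mulrA Hs !(rmorphB, rmorphM) /=.
  by field; rewrite zs.
have iZ0 := cintegrableZ mD (- a1%:C) (ist P0).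
have iZ1 := cintegrableZ mD (z - b1%:C) (ist P1).
have iN1 := cintegrableZ mD (-1) iP1.
have iN1Z0 := cintegrableD mD iN1 iZ0.
rewrite (cRintD mD iZ1 iN1Z0) (cRintD mD iN1 iZ0) !(cRintZ mD) // (cRint_real mD).
by rewrite mulN1r mulNr addrA.
Qed.

Context {p : nat -> {poly R}} {a b : nat -> R}.
Hypothesis orthonormal : forall m k,
  Rintegral mu D (fun s => (p m).[s] * (p k).[s] * w s) = (m == k)%:R.
Hypothesis size_p0 : size (p 0%N) = 1%N.
Hypothesis rec0 : a 1%N *: p 1%N = ('X - (b 0%N)%:P) * p 0%N.
Hypothesis rec : forall m,
  a m.+2 *: p m.+2 = ('X - (b m.+1)%:P) * p m.+1 - a m.+1 *: p m.

Lemma Rintegral_orthonormal_weight m {c} : p 0%N = c%:P ->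
  c * Rintegral mu D (fun s => (p m).[s] * w s) = (m == 0%N)%:R.
Proof.
move=> p0E; rewrite -orthonormal -RintegralZl ?integrable_horner_weight //.
by apply: eq_Rintegral => s _; rewrite p0E hornerC; ring.
Qed.

Lemma casoratian_eps_eq1 m :
  (a m.+1)%:C * (eps I w p m z * cpoly (p m.+1) z - cpoly (p m) z * eps I w p m.+1 z) = 1.
Proof.
have epsE n : eps I w p n z = stieltjes (p n) by [].
have [c p0E] : exists c, p 0%N = c%:P.
  by exists (p 0%N)`_0; apply/size1_polyC; rewrite size_p0.
have c_neq0 : c != 0 by rewrite -polyC_eq0 -p0E -size_poly_eq0 size_p0.
elim: m => [|m IH]; rewrite !epsE.
- have rec0' : a 1%N *: p 1%N = ('X - (b 0%N)%:P) * p 0%N - 0 *: p 0%N.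
    by rewrite scale0r subr0.
  have hP := cpoly_recurrence z rec0'.
  have hE := cauchy_transform_recurrence rec0'.
  transitivity (stieltjes (p 0%N) * ((a 1%N)%:C * cpoly (p 1%N) z)
                - cpoly (p 0%N) z * ((a 1%N)%:C * stieltjes (p 1%N))); first by ring.
  have cP0 : cpoly (p 0%N) z = c%:C by rewrite p0E /cpoly map_polyC hornerC.
  have cJ : c * Rintegral mu D (fun s => (p 0%N).[s] * w s) = 1.
    by rewrite (Rintegral_orthonormal_weight 0 p0E).
  rewrite hP hE cP0 rmorph0 !mul0r !subr0 -(rmorph1 (real_complex R)) -cJ rmorphM /=.
  ring.
- rewrite !epsE in IH.
  have hP := cpoly_recurrence z (rec m).
  have hE := cauchy_transform_recurrence (rec m).
  have := Rintegral_orthonormal_weight m.+1 p0E; rewrite /= => /eqP.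
  rewrite mulf_eq0 (negbTE c_neq0) /= => /eqP I0.
  transitivity (stieltjes (p m.+1) * ((a m.+2)%:C * cpoly (p m.+2) z)
                - cpoly (p m.+1) z * ((a m.+2)%:C * stieltjes (p m.+2))); first by ring.
  by rewrite hP hE I0 rmorph0 -IH; ring.
Qed.
End StieltjesFunctions.

Lemma cderive_div {R : rcfType} (f g : R[i] -> R[i]) z :
  cderivable f z -> cderivable g z -> g z != 0 ->
  cderive (fun u => f u / g u) z
  = (cderive f z * g z - f z * cderive g z) / g z ^+ 2.
Proof.
move=> df dg gz; rewrite {1}/cderive derive1E.
rewrite (deriveM df (derivableV gz dg)) (deriveV gz dg) -!derive1E.
rewrite -/(cderive f z) -/(cderive g z).
move: (cderive f z) (cderive g z) => Df Dg.
rewrite -![_ *: _]/(_ * _); move: (f z) (g z) gz => x y y0.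
by field.
Qed.

Lemma casoratian_quotient_identity {F : fieldType} (a W V E E' E0 P P' P0 u u' : F) :
  a * (E0 * P - P0 * E) = 1 -> W * u' = 2 * V * u -> u != 0 ->
  W * ((E' * u - E * u') / u ^+ 2)
  = (a * W * (E0 * P' - P0 * E') + a * V * (E0 * P + E * P0) - V) * (E / u)
    - a * (W * (E * P' - P * E') + 2 * V * E * P) * (E0 / u).
Proof.
move=> casoratian Wu u_neq0.
transitivity ((W * E' - 2 * V * E) / u).
  transitivity ((W * E' * u - E * (W * u')) / u ^+ 2); first by ring.
  by rewrite Wu; field; rewrite u_neq0.
have -> : W * E' - 2 * V * E
          = (W * E' - V * E) * (a * (E0 * P - P0 * E)) - V * E.
  by rewrite casoratian; ring.
by ring.
Qed.

Theorem corollary2p2 (R : realType) (I : interval R) (w : R -> R)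
  (V W : {poly R}) (p : nat -> {poly R}) (a b : nat -> R)
  (wc : R[i] -> R[i]) (O : set R[i]) (n : nat) (z : R[i]) :
  (* w is a weight on I with finite moments *)
  measurable_fun [set` I] w ->
  (forall s, s \in I -> 0 <= w s) ->
  (forall k : nat,
     (@lebesgue_measure R).-integrable [set` I] (fun s => (s ^+ k * w s)%:E)) ->
  (* logarithmic derivative of w is 2V/W *)
  W != 0 ->
  (forall s, interior [set` I] s ->
     0 < w s /\
     (W.[s] != 0 ->
        derivable (fun t => ln (w t)) s 1 /\
        (fun t => ln (w t))^`()%classic s = 2 * V.[s] / W.[s])) ->
  (* p_n orthonormal for w on I, p_n = gamma_n x^n + ..., gamma_n > 0 *)
  (forall m, size (p m) = m.+1 /\ 0 < lead_coef (p m)) ->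
  (forall m k, Rintegral (@lebesgue_measure R) [set` I]
                 (fun s => (p m).[s] * (p k).[s] * w s) = (m == k)%:R) ->
  (* three term recurrence a_{m+1} p_{m+1} = (x - b_m) p_m - a_m p_{m-1},
     with p_{-1} = 0 *)
  a 1 *: p 1 = ('X - (b 0)%:P) * p 0 ->
  (forall m, a m.+2 *: p m.+2 = ('X - (b m.+1)%:P) * p m.+1 - a m.+1 *: p m) ->
  (* wc : (complex-analytic continuation of) w near z, satisfying
     W wc' = 2 V wc (i.e. wc'/wc = 2V/W) on an open neighbourhood O of z *)
  open (O : set R[i]^o) -> O z ->
  (forall u, O u -> cderivable wc u /\
                    cpoly W u * cderive wc u = 2 * cpoly V u * wc u) ->
  wc z != 0 ->
  (* z lies off I (at positive distance from I) *)
  (exists2 d : R, 0 < d & forall s, s \in I -> d%:C <= `|z - s%:C|) ->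
  (1 <= n)%N ->
  cpoly W z * cderive (fun u => eps I w p n u / wc u) z =
    (Omega I w p a V W n z - cpoly V z) * (eps I w p n z / wc z)
    - (a n)%:C * Theta I w p V W n z * (eps I w p n.-1 z / wc z).
Proof.
move=> _ _ moments _ _ size_p orthonormal rec0 rec _ Oz wc_eq wcz [d d_gt0 z_far].
case: n => // m _.
have {}z_far s : [set` I]%classic s -> d <= normc (z - s%:C).
  by move=> Is; rewrite -lecR; exact: z_far.
have [dwc W_wc] := wc_eq z Oz.
have dE : cderivable (eps I w p m.+1) z.
  exact (cauchy_transform_derivable (measurable_itv I)
            (integrable_horner_weight moments (p m.+1)) d_gt0 z_far).
have casoratian :=
  casoratian_eps_eq1 moments d_gt0 z_far orthonormal (size_p 0%N).1 rec0 rec m.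
rewrite cderive_div // /Omega /Theta /=.
exact: casoratian_quotient_identity casoratian W_wc wcz.
Qed.
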